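(* Let $F:\mathbb{R}^n\rightrightarrows\mathbb{R}^n$ be a (possibly multi-valued) mapping and consider the system $x_{t+1}=x_t+u_t$, $y_t\in F(x_t+u_t)$, $t\in\mathbb{N}_0$, with $x_t,u_t,y_t\in\mathbb{R}^n$. This system is cyclo-passive if and only if $F$ is cyclically monotone.
   Context: A trajectory $t\mapsto(x_t,u_t,y_t)$ is admissible if $x_{t+1}=x_t+u_t$ and $y_t\in F(x_t+u_t)$ for all $t\in\mathbb{N}_0$. The system is cyclo-passive if $\sum_{t=t_1}^{t_2-1}u_t^\top y_t\ge 0$ holds for all $t_1,t_2\in\mathbb{N}_0$ with $t_1\le t_2$ and all admissible trajectories satisfying $x_{t_2}=x_{t_1}$. The mapping $F$ is cyclically monotone if $\sum_{j=0}^m w_j^\top(v_j-v_{j+1})\ge 0$ for every $m\in\mathbb{N}_0$, all points $v_0,\ldots,v_m\in\mathbb{R}^n$, all $w_j\in F(v_j)$ ($j=0,\dots,m$), where $v_{m+1}:=v_0$. *)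

From mathcomp Require Import all_boot all_order all_algebra.
From mathcomp Require Import reals.
Set Implicit Arguments. Unset Strict Implicit. Unset Printing Implicit Defensive.
Import Order.TTheory GRing.Theory Num.Theory.
Local Open Scope ring_scope.

(* Vectors of R^n are row vectors 'rV[R]_n; a set-valued map
   F : R^n ⇉ R^n is a relation: y \in F x  <->  F x y. *)

Definition dotv (R : realType) (n : nat) (a b : 'rV[R]_n) : R :=
  \sum_(i < n) a 0 i * b 0 i.

Definition admissible (R : realType) (n : nat)
    (F : 'rV[R]_n -> 'rV[R]_n -> Prop)
    (x u y : nat -> 'rV[R]_n) : Prop :=
  forall t : nat, x t.+1 = x t + u t /\ F (x t + u t) (y t).

Definition cyclo_passive (R : realType) (n : nat)
    (F : 'rV[R]_n -> 'rV[R]_n -> Prop) : Prop :=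
  forall (x u y : nat -> 'rV[R]_n), admissible F x u y ->
  forall t1 t2 : nat, (t1 <= t2)%N -> x t2 = x t1 ->
    0 <= \sum_(t1 <= t < t2) dotv (u t) (y t).

Definition cyclically_monotone (R : realType) (n : nat)
    (F : 'rV[R]_n -> 'rV[R]_n -> Prop) : Prop :=
  forall (m : nat) (v w : nat -> 'rV[R]_n),
    (forall j : nat, (j <= m)%N -> F (v j) (w j)) ->
    0 <= \sum_(0 <= j < m.+1)
           dotv (w j) (v j - (if j == m then v 0%N else v j.+1)).

From mathcomp Require Import all_boot all_order all_algebra.
From mathcomp Require Import reals.
From mathcomp Require Import zify.
Set Implicit Arguments. Unset Strict Implicit. Unset Printing Implicit Defensive.
Import Order.TTheory GRing.Theory Num.Theory.
Local Open Scope ring_scope.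

(* Along an admissible trajectory u_t = x_{t+1} - x_t and y_t lies in
   F(x_{t+1}), so a cycle x_{t1}, ..., x_{t2} = x_{t1} of the system is a
   closed loop of points carrying the outputs at the END of each step, and
   its supplied energy is sum_t (x_{t+1} - x_t)^T y_t.  Cyclic monotonicity
   is the same inequality for loops carrying w_j in F(v_j) at the START of
   each step, with the opposite sign of the increments.  Reversing the
   direction of a loop exchanges the two conventions, and every loop is
   realised by some trajectory (stay at the last point once it is reached),
   which gives both implications. *)

Lemma dotvC (R : realType) (n : nat) (a b : 'rV[R]_n) : dotv a b = dotv b a.
Proof. by apply: eq_bigr => i _; rewrite mulrC. Qed.

Lemma big_nat_rev_steps (T U : Type) (V : nmodType) (phi : T -> T -> U -> V)
    (m : nat) (v : nat -> T) (w : nat -> U) :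
  \sum_(0 <= j < m.+1) phi (v (m.+1 - j)%N) (v (m.+1 - j.+1)%N) (w (m - j)%N)
  = \sum_(0 <= j < m.+1) phi (v j.+1) (v j) (w j).
Proof.
rewrite big_nat_rev; apply: eq_big_nat => j /andP [_ lt_jm].
by rewrite add0n; congr phi; congr (_ _); lia.
Qed.

Section Loops.

Variables (R : realType) (n : nat).
Implicit Types (F : 'rV[R]_n -> 'rV[R]_n -> Prop) (v w x u y : nat -> 'rV[R]_n).

Definition loop_monotone F := forall m v w,
  v m.+1 = v 0%N -> (forall j, (j <= m)%N -> F (v j) (w j)) ->
  0 <= \sum_(0 <= j < m.+1) dotv (w j) (v j - v j.+1).

Definition reverse_loop_monotone F := forall m v w,
  v m.+1 = v 0%N -> (forall j, (j <= m)%N -> F (v j.+1) (w j)) ->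
  0 <= \sum_(0 <= j < m.+1) dotv (v j.+1 - v j) (w j).

Lemma cyclically_monotone_loops F :
  cyclically_monotone F <-> loop_monotone F.
Proof.
split=> [CM m v w closed_v Fvw | LM m v w Fvw].
  rewrite (eq_big_nat _ _ (F2 := fun j => dotv (w j) (v j -
    (if j == m then v 0%N else v j.+1)))) ?CM // => j _.
  by case: eqP => // ->; rewrite closed_v.
pose v' j := if j == m.+1 then v 0%N else v j.
have -> : \sum_(0 <= j < m.+1) dotv (w j) (v j - (if j == m then v 0%N else v j.+1))
    = \sum_(0 <= j < m.+1) dotv (w j) (v' j - v' j.+1).
  by apply: eq_big_nat => j /andP [_ lt_jm]; rewrite /v' eqSS (ltn_eqF lt_jm).
apply: LM => [|j le_jm]; first by rewrite /v' eqxx.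
by rewrite /v' ltn_eqF //; apply: Fvw.
Qed.

Lemma loop_monotone_reverse F :
  loop_monotone F <-> reverse_loop_monotone F.
Proof.
split=> [LM | RLM] m v w closed_v Fvw.
- have := LM m (fun j => v (m.+1 - j)%N) (fun j => w (m - j)%N).
  rewrite (big_nat_rev_steps (fun a b c => dotv c (a - b))).
  under [X in _ -> 0 <= X]eq_bigr do rewrite dotvC.
  apply=> [|j le_jm]; first by rewrite subnn subn0.
  rewrite subSn //; exact: Fvw (leq_subr _ _).
- have := RLM m (fun j => v (m.+1 - j)%N) (fun j => w (m - j)%N).
  rewrite (big_nat_rev_steps (fun a b c => dotv (b - a) c)).
  under [X in _ -> 0 <= X]eq_bigr do rewrite dotvC.
  apply=> [|j le_jm]; first by rewrite subnn subn0.
  rewrite subSS; exact: Fvw (leq_subr _ _).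
Qed.

Lemma admissible_step F x u y t :
  admissible F x u y -> u t = x t.+1 - x t /\ F (x t.+1) (y t).
Proof. by move=> /(_ t) [-> Fxy]; rewrite addrAC subrr add0r. Qed.

Lemma admissible_increments F x y :
  (forall t, F (x t.+1) (y t)) -> admissible F x (fun t => x t.+1 - x t) y.
Proof. by move=> Fxy t; rewrite addrC subrK. Qed.

Lemma reverse_loop_monotone_passive F :
  reverse_loop_monotone F -> cyclo_passive F.
Proof.
move=> RLM x u y adm t1 t2 le_t12 closed_x.
have [-> | [m def_t2]] : t2 = t1 \/ exists m, t2 = (t1 + m.+1)%N
  by case: (t2 - t1)%N (subnKC le_t12) => [|m] <-;
     [left; rewrite addn0 | right; exists m].
  by rewrite big_geq.
rewrite def_t2 -{1}[t1]add0n big_addn addKn.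
have := RLM m (fun j => x (j + t1)%N) (fun j => y (j + t1)%N).
under [X in _ -> _ -> 0 <= X]eq_bigr => j _ do
  rewrite addSn -(proj1 (admissible_step _ adm)).
apply; first by rewrite add0n addnC -def_t2.
by move=> j _; rewrite addSn; case: (admissible_step (j + t1) adm).
Qed.

Lemma passive_reverse_loop_monotone F :
  cyclo_passive F -> reverse_loop_monotone F.
Proof.
move=> CP m v w closed_v Fvw.
pose x t := v (minn t m.+1).
pose y t := w (minn t m).
have Fxy t : F (x t.+1) (y t) by rewrite /x /y minnSS; apply/Fvw/geq_minr.
have -> : \sum_(0 <= j < m.+1) dotv (v j.+1 - v j) (w j)
    = \sum_(0 <= t < m.+1) dotv (x t.+1 - x t) (y t).
  apply: eq_big_nat => t /andP [_]; rewrite ltnS => le_tm.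
  by rewrite /x /y minnSS (minn_idPl le_tm) (minn_idPl (leqW le_tm)).
apply: CP (admissible_increments Fxy) _ _ (leq0n _) _.
by rewrite /x minnn min0n.
Qed.

End Loops.

Theorem lemma4 (R : realType) (n : nat) (F : 'rV[R]_n -> 'rV[R]_n -> Prop) :
  cyclo_passive F <-> cyclically_monotone F.
Proof.
rewrite cyclically_monotone_loops loop_monotone_reverse.
split; [exact: passive_reverse_loop_monotone | exact: reverse_loop_monotone_passive].
Qed.
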